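(* Let $A=\mathbb{C}Q/I$ be a toupie algebra and let $Q_a$ be the $a$-Kronecker quiver (two vertices, a source and a sink, and $a$ arrows from the source to the sink). The Lie subalgebra of $\mathrm{HH}^1(A)$ generated by $\{x_j, w_{pq}: p\ne q,\ 1\le p,q\le a,\ 2\le j\le a\}$ is isomorphic to $\mathrm{HH}^1(\mathbb{C}Q_a)$.
   Context: A finite quiver $Q$ is a toupie quiver if it has a unique source $0$, a unique sink $\omega$, and every other vertex is the source of exactly one arrow and the target of exactly one arrow. A branch is a path from $0$ to $\omega$. A toupie algebra is $A=\mathbb{C}Q/I$ with $Q$ toupie and $I$ an admissible ideal generated by monomial relations (paths inside one branch) and non-monomial relations (linear combinations of branches). $\alpha^{(1)},\dots,\alpha^{(a)}$ are the arrows from $0$ to $\omega$. $E=\mathbb{C}Q_0$. For an arrow $\gamma$ and $h\in e_{s(\gamma)}Ae_{t(\gamma)}$, $\gamma\|h$ is the derivation of $A$ vanishing on $E$ sending $\gamma$ to $h$ and other arrows to $0$; $\mathrm{HH}^1(A)$ (derivations vanishing on $E$ modulo inner ones) is a Lie algebra under the Gerstenhaber bracket. $w_{pq}$ is the class of $\alpha^{(p)}\|\alpha^{(q)}$ for $p\neq q$, and $x_j$ the class of $\alpha^{(j)}\|\alpha^{(j)}-\alpha^{(1)}\|\alpha^{(1)}$. *)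

From HB Require Import structures.
From mathcomp Require Import all_boot all_order all_algebra.
From mathcomp Require Import complex Rstruct.

Set Implicit Arguments.
Unset Strict Implicit.
Unset Printing Implicit Defensive.
Import GRing.Theory.
Local Open Scope ring_scope.

Definition CC : fieldType := (Rdefinitions.R)[i].

Section PathAlgebra.
Variables (V Ar : finType) (s t : Ar -> V).

(** A (candidate) path: starting vertex and a sequence of arrows
    (composed left to right, i.e. first arrow first). *)
Definition qpath : Type := (V * seq Ar)%type.

Definition ptgt (p : qpath) : V := last p.1 (map t p.2).

Definition pvalid (p : qpath) : bool :=
  (if p.2 is a :: _ then s a == p.1 else true) &&
  sorted (fun a b => t a == s b) p.2.

(** Elements of the path algebra CQ: coefficient functions on paths,
    vanishing on non-paths.  (Q finite and, for admissible ideals, acyclic,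
    so this is the usual path algebra.) *)
Definition elt : Type := qpath -> CC.

Definition inCQ (f : elt) : Prop := forall p, ~~ pvalid p -> f p = 0.

Definition ezero : elt := fun _ => 0.
Definition eadd (f g : elt) : elt := fun p => f p + g p.
Definition eopp (f : elt) : elt := fun p => - f p.
Definition escale (c : CC) (f : elt) : elt := fun p => c * f p.
(** product = concatenation of paths *)
Definition emul (f g : elt) : elt := fun p =>
  \sum_(k < (size p.2).+1)
     f (p.1, take k p.2) * g (ptgt (p.1, take k p.2), drop k p.2).
Definition edelta (q : qpath) : elt := fun p => if p == q then 1 else 0.
Definition evx (v : V) : elt := edelta (v, [::]).
Definition earr (a : Ar) : elt := edelta (s a, [:: a]).

Inductive ideal_gen (S : elt -> Prop) : elt -> Prop :=
| ig_zero : ideal_gen S ezero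
| ig_add f g : ideal_gen S f -> ideal_gen S g -> ideal_gen S (eadd f g)
| ig_gen x r y : S r -> inCQ x -> inCQ y -> ideal_gen S (emul (emul x r) y).

(** f lies in R^m, R the arrow ideal *)
Definition inRpow (m : nat) (f : elt) : Prop :=
  forall p, (size p.2 < m)%N -> f p = 0.

Definition admissible (I : elt -> Prop) : Prop :=
  (forall f, I f -> inRpow 2 f) /\
  exists m, forall f, inCQ f -> inRpow m f -> I f.

Variable I : elt -> Prop.

Definition eqA (f g : elt) : Prop := I (eadd f (eopp g)).

(** [D] (a map on representatives) induces a C-linear derivation of A
    vanishing on E. *)
Definition DerE (D : elt -> elt) : Prop :=
  [/\ forall f, inCQ f -> inCQ (D f),
      forall f g, inCQ f -> inCQ g -> eqA f g -> eqA (D f) (D g)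
    & [/\ forall f g, inCQ f -> inCQ g -> eqA (D (eadd f g)) (eadd (D f) (D g)),
      forall c f, inCQ f -> eqA (D (escale c f)) (escale c (D f)),
      forall f g, inCQ f -> inCQ g ->
        eqA (D (emul f g)) (eadd (emul (D f) g) (emul f (D g)))
    & forall v, eqA (D (evx v)) ezero]].

Definition Inner (D : elt -> elt) : Prop :=
  exists2 x, inCQ x &
    forall f, inCQ f -> eqA (D f) (eadd (emul x f) (eopp (emul f x))).

Definition dzero : elt -> elt := fun _ => ezero.
Definition dadd (D D' : elt -> elt) : elt -> elt := fun f => eadd (D f) (D' f).
Definition dscale (c : CC) (D : elt -> elt) : elt -> elt :=
  fun f => escale c (D f).
(** Gerstenhaber bracket on HH^1 = commutator of derivations *)
Definition dbr (D D' : elt -> elt) : elt -> elt :=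
  fun f => eadd (D (D' f)) (eopp (D' (D f))).

(** equality of classes in HH^1(A) = Der_E(A)/Inn_E(A) *)
Definition hheq (D D' : elt -> elt) : Prop :=
  Inner (fun f => eadd (D f) (eopp (D' f))).

(** Lie subalgebra of HH^1(A) generated by a set G of (representatives of)
    classes, described by the set of representatives of its classes. *)
Inductive lie_gen (G : (elt -> elt) -> Prop) : (elt -> elt) -> Prop :=
| lg_gen D : G D -> lie_gen G D
| lg_zero : lie_gen G dzero
| lg_add D D' : lie_gen G D -> lie_gen G D' -> lie_gen G (dadd D D')
| lg_scale c D : lie_gen G D -> lie_gen G (dscale c D)
| lg_br D D' : lie_gen G D -> lie_gen G D' -> lie_gen G (dbr D D')
| lg_eq D D' : lie_gen G D -> DerE D' -> hheq D D' -> lie_gen G D'.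

(** [D] is (a representative of) the derivation sending each arrow [b]
    to [h b] (and vanishing on E); for h b = (if b == g then x else 0)
    this is the derivation  g || x  of the paper. *)
Definition on_arrows (D : elt -> elt) (h : Ar -> elt) : Prop :=
  DerE D /\ forall b, eqA (D (earr b)) (h b).

End PathAlgebra.

Arguments ezero {V Ar}.
Arguments eadd {V Ar}.
Arguments eopp {V Ar}.
Arguments escale {V Ar}.
Arguments edelta {V Ar}.

Section Toupie.
Variables (V Ar : finType) (s t : Ar -> V).

Definition is_toupie (o w : V) : Prop :=
  [/\ o != w,
      forall v, [forall a, t a != v] = (v == o),
      forall v, [forall a, s a != v] = (v == w)
    & forall v, v != o -> v != w ->
        #|[pred a | s a == v]| = 1%N /\ #|[pred a | t a == v]| = 1%N].

Definition is_branch (o w : V) (p : qpath V Ar) : bool :=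
  [&& pvalid s t p, p.1 == o & ptgt t p == w].

(** admissible generators of a toupie algebra: monomial relations (paths
    lying inside one branch) and non-monomial relations (linear combinations
    of branches). *)
Definition toupie_rel (o w : V) (r : elt V Ar) : Prop :=
  inCQ s t r /\
  ((exists p b, [/\ pvalid s t p, is_branch o w b, infix p.2 b.2 & r = edelta p])
   \/ (forall p, r p != 0 -> is_branch o w p)).

End Toupie.

(** ---- The a-Kronecker quiver Q_a: vertices false (source), true (sink),
    arrows 'I_a all from false to true. ---- *)
Definition kron_s (a : nat) : 'I_a -> bool := fun _ => false.
Definition kron_t (a : nat) : 'I_a -> bool := fun _ => true.
Arguments kron_s : clear implicits.
Arguments kron_t : clear implicits.
Definition kron_I (a : nat) : elt bool 'I_a -> Prop :=
  ideal_gen (kron_s a) (kron_t a) (fun _ => False).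
Arguments kron_I : clear implicits.

Definition HH1_iso_sub
  (V1 Ar1 : finType) (s1 t1 : Ar1 -> V1) (I1 : elt V1 Ar1 -> Prop)
  (V2 Ar2 : finType) (s2 t2 : Ar2 -> V2) (I2 : elt V2 Ar2 -> Prop)
  (L : (elt V2 Ar2 -> elt V2 Ar2) -> Prop) : Prop :=
  exists phi : (elt V1 Ar1 -> elt V1 Ar1) -> (elt V2 Ar2 -> elt V2 Ar2),
  [/\
      forall D, DerE s1 t1 I1 D -> DerE s2 t2 I2 (phi D) /\ L (phi D),
      forall D D', DerE s1 t1 I1 D -> DerE s1 t1 I1 D' ->
        hheq s1 t1 I1 D D' -> hheq s2 t2 I2 (phi D) (phi D')
    & [/\
      forall D D', DerE s1 t1 I1 D -> DerE s1 t1 I1 D' ->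
        hheq s2 t2 I2 (phi (dadd D D')) (dadd (phi D) (phi D')),
      forall c D, DerE s1 t1 I1 D ->
        hheq s2 t2 I2 (phi (dscale c D)) (dscale c (phi D)),
      forall D D', DerE s1 t1 I1 D -> DerE s1 t1 I1 D' ->
        hheq s2 t2 I2 (phi (dbr D D')) (dbr (phi D) (phi D')),
      forall D, DerE s1 t1 I1 D -> Inner s2 t2 I2 (phi D) -> Inner s1 t1 I1 D
    &
      forall D2, DerE s2 t2 I2 D2 -> L D2 ->
        exists2 D, DerE s1 t1 I1 D & hheq s2 t2 I2 (phi D) D2]].

(* Both sides are sl_a.  Modulo inner derivations, a derivation vanishing on E is
   determined by its values on the arrows, because some power of the arrow ideal lies
   in I.  For the Kronecker algebra this makes D |-> (matrix of D on the arrows) an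
   isomorphism from HH^1(C Q_a) onto gl_a modulo the scalar matrices, i.e. onto sl_a.
   For the toupie algebra, a matrix N acting on the arrows alpha^(i) from the source to
   the sink, and by zero on all other paths, is a derivation: no arrow enters the source
   or leaves the sink, and I lies in the square of the arrow ideal.  It is inner only
   when N is scalar.  The generators w_pq and x_j are the matrix units E_pq (p != q) and
   E_jj - E_11, which span sl_a, so the generated Lie subalgebra is the image of sl_a and
   D |-> (traceless part of the matrix of D) is the isomorphism. *)

From HB Require Import structures.
From mathcomp Require Import all_boot all_order all_algebra.
From mathcomp Require Import complex Rstruct.
From mathcomp Require Import ring.
From Stdlib Require Import FunctionalExtensionality.

Set Implicit Arguments.
Unset Strict Implicit.
Unset Printing Implicit Defensive.
Import GRing.Theory Num.Theory.
Local Open Scope ring_scope.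

Section PathAlgebra.
Variables (V Ar : finType) (s t : Ar -> V).
Implicit Types (f g h : elt V Ar) (p : qpath V Ar).

Lemma elt_ext f g : (forall p, f p = g p) -> f = g.
Proof. exact: functional_extensionality. Qed.

Lemma esumE (T : Type) (r : seq T) (F : T -> elt V Ar) p :
  (\big[eadd/ezero]_(i <- r) F i) p = \sum_(i <- r) F i p.
Proof. by elim: r => [|i r IH]; rewrite ?big_nil ?big_cons // /eadd IH. Qed.

Lemma emulDl f g h : emul t (eadd f g) h = eadd (emul t f h) (emul t g h).
Proof.
by apply: elt_ext => p; rewrite /emul /eadd -big_split; apply: eq_bigr => k _; rewrite mulrDl.
Qed.

Lemma emulDr f g h : emul t h (eadd f g) = eadd (emul t h f) (emul t h g).
Proof.
by apply: elt_ext => p; rewrite /emul /eadd -big_split; apply: eq_bigr => k _; rewrite mulrDr.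
Qed.

Lemma emulZl c f g : emul t (escale c f) g = escale c (emul t f g).
Proof.
by apply: elt_ext => p; rewrite /emul /escale mulr_sumr; apply: eq_bigr => k _; rewrite mulrA.
Qed.

Lemma emulZr c f g : emul t f (escale c g) = escale c (emul t f g).
Proof.
by apply: elt_ext => p; rewrite /emul /escale mulr_sumr; apply: eq_bigr => k _; rewrite mulrCA.
Qed.

Lemma emulNl f g : emul t (eopp f) g = eopp (emul t f g).
Proof.
by apply: elt_ext => p; rewrite /emul /eopp -sumrN; apply: eq_bigr => k _; rewrite mulNr.
Qed.

Lemma emulNr f g : emul t f (eopp g) = eopp (emul t f g).
Proof.
by apply: elt_ext => p; rewrite /emul /eopp -sumrN; apply: eq_bigr => k _; rewrite mulrN.
Qed.

Lemma emul0l f : emul t ezero f = ezero.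
Proof. by apply: elt_ext => p; rewrite /emul big1 // => k _; rewrite mul0r. Qed.

Lemma emul0r f : emul t f ezero = ezero.
Proof. by apply: elt_ext => p; rewrite /emul big1 // => k _; rewrite mulr0. Qed.

Lemma emul_suml (T : Type) (r : seq T) (F : T -> elt V Ar) g :
  emul t (\big[eadd/ezero]_(i <- r) F i) g = \big[eadd/ezero]_(i <- r) emul t (F i) g.
Proof. by elim: r => [|i r IH]; rewrite ?big_nil ?big_cons ?emul0l // emulDl IH. Qed.

Lemma emul_sumr (T : Type) (r : seq T) (F : T -> elt V Ar) g :
  emul t g (\big[eadd/ezero]_(i <- r) F i) = \big[eadd/ezero]_(i <- r) emul t g (F i).
Proof. by elim: r => [|i r IH]; rewrite ?big_nil ?big_cons ?emul0r // emulDr IH. Qed.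

Lemma emul_evxl v f p : emul t (evx v) f p = if p.1 == v then f p else 0.
Proof.
rewrite /emul big_ord_recl big1 /= ?take0 ?drop0 ?addr0.
  rewrite /evx /edelta xpair_eqE eqxx andbT.
  by case: p => v' l /=; case: eqP; rewrite ?mul1r ?mul0r.
move=> k _; have : take (bump 0 k) p.2 != [::].
  by rewrite -size_eq0 size_takel // /bump /=; exact: ltn_ord.
by rewrite /evx /edelta xpair_eqE andbC => /negbTE ->; rewrite mul0r.
Qed.

Lemma emul_evxr v f p : emul t f (evx v) p = if ptgt t p == v then f p else 0.
Proof.
rewrite /emul big_ord_recr big1 /= ?take_size ?drop_size ?add0r.
  rewrite /evx /edelta xpair_eqE eqxx andbT.
  by case: p => v' l /=; case: eqP; rewrite ?mulr1 ?mulr0.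
move=> k _; have : drop k p.2 != [::] by rewrite -size_eq0 size_drop subn_eq0 -ltnNge ltn_ord.
by rewrite /evx /edelta xpair_eqE andbC => /negbTE ->; rewrite mulr0.
Qed.

Lemma emul_len1 f g v b :
  emul t f g (v, [:: b]) = f (v, [::]) * g (v, [:: b]) + f (v, [:: b]) * g (t b, [::]).
Proof. by rewrite /emul !big_ord_recl big_ord0 addr0. Qed.

Lemma ptgt_cat v l1 l2 : ptgt t (v, l1 ++ l2) = ptgt t (ptgt t (v, l1), l2).
Proof. by rewrite /ptgt /= map_cat last_cat. Qed.

Lemma pvalid_cons v b l : pvalid s t (v, b :: l) = (s b == v) && pvalid s t (t b, l).
Proof. by rewrite /pvalid /=; case: l => [|c l] /=; rewrite ?andbT // [s c == _]eq_sym. Qed.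

Lemma pvalid_cat v l1 l2 :
  pvalid s t (v, l1 ++ l2) = pvalid s t (v, l1) && pvalid s t (ptgt t (v, l1), l2).
Proof. by elim: l1 v => [|b l1 IH] v //; rewrite cat_cons !pvalid_cons IH andbA. Qed.

Lemma emulE f g p : emul t f g p = \sum_(0 <= k < (size p.2).+1)
  f (p.1, take k p.2) * g (ptgt t (p.1, take k p.2), drop k p.2).
Proof. by rewrite big_mkord. Qed.

Lemma emulA f g h : emul t (emul t f g) h = emul t f (emul t g h).
Proof.
apply: elt_ext => -[v l]; rewrite emulE /=; set N := (size l).+1.
transitivity (\sum_(0 <= k < N) \sum_(0 <= j < N)
   (if (j <= k)%N then f (v, take j l) * g (ptgt t (v, take j l), take (k - j) (drop j l))
                   * h (ptgt t (v, take k l), drop k l) else 0)).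
  apply: eq_big_nat => k /andP [_ Hk].
  rewrite emulE /= size_takel // mulr_suml (big_nat_widen _ _ _ _ _ Hk) big_mkcond.
  apply: eq_big_nat => j /andP [_ Hj]; rewrite ltnS.
  by case: (leqP j k) => // Hjk; rewrite take_takel // take_drop subnK.
rewrite exchange_big_nat emulE /=; apply: eq_big_nat => j /andP [_ Hj].
rewrite emulE /= size_drop mulr_sumr.
rewrite (@big_cat_nat _ _ _ j) ?leq0n ?(ltnW Hj) //= [X in X + _]big1_seq ?add0r; last first.
  by move=> i; rewrite mem_index_iota => /andP [_]; rewrite ltnNge => /negbTE ->.
rewrite -{1}[j]add0n big_addn /N (subSn (Hj : (j <= size l)%N)); apply: eq_big_nat => i _.
by rewrite leq_addl addnK -ptgt_cat -takeD drop_drop -mulrA addnC.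
Qed.

Lemma inCQ0 : inCQ s t ezero. Proof. by []. Qed.

Lemma inCQD f g : inCQ s t f -> inCQ s t g -> inCQ s t (eadd f g).
Proof. by move=> Hf Hg p Hp; rewrite /eadd Hf // Hg // addr0. Qed.

Lemma inCQZ c f : inCQ s t f -> inCQ s t (escale c f).
Proof. by move=> Hf p Hp; rewrite /escale Hf // mulr0. Qed.

Lemma inCQN f : inCQ s t f -> inCQ s t (eopp f).
Proof. by move=> Hf p Hp; rewrite /eopp Hf // oppr0. Qed.

Lemma inCQ_sum (T : Type) (r : seq T) (F : T -> elt V Ar) :
  (forall i, inCQ s t (F i)) -> inCQ s t (\big[eadd/ezero]_(i <- r) F i).
Proof. by move=> HF; elim: r => [|j r IHr]; rewrite ?big_nil ?big_cons //; exact: inCQD. Qed.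

Lemma inCQM f g : inCQ s t f -> inCQ s t g -> inCQ s t (emul t f g).
Proof.
move=> Hf Hg [v l] Hp; rewrite /emul big1 // => k _ /=.
move: Hp; rewrite /= -{1}(cat_take_drop k l) pvalid_cat negb_and.
by case/orP => H; [rewrite Hf ?mul0r | rewrite Hg ?mulr0].
Qed.

Lemma inCQ_delta q : pvalid s t q -> inCQ s t (edelta q).
Proof. by move=> Hq p Hp; rewrite /edelta; case: eqP => // E; rewrite E Hq in Hp. Qed.

Lemma inCQ_evx v : inCQ s t (evx v).
Proof. exact: inCQ_delta. Qed.

Lemma inCQ_earr b : inCQ s t (earr s b).
Proof. by apply: inCQ_delta; rewrite /pvalid /= eqxx. Qed.

End PathAlgebra.

Arguments inCQ0 {V Ar} s t.
Arguments inCQ_evx {V Ar} s t v.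
Arguments inCQ_earr {V Ar} s t b.

Section Ideal.
Variables (V Ar : finType) (s t : Ar -> V) (S : elt V Ar -> Prop).
Implicit Types (f g h : elt V Ar).
Local Notation I := (ideal_gen s t S).
Local Notation "f === g" := (eqA I f g) (at level 70).

Lemma I_ext f g : I f -> (forall p, f p = g p) -> I g.
Proof. by move=> If /elt_ext <-. Qed.

Lemma I0 f : (forall p, f p = 0) -> I f.
Proof. by move=> H; apply: I_ext (ig_zero _ _ _) _ => p; rewrite H. Qed.

Lemma IZ c f : I f -> I (escale c f).
Proof.
elim=> [|f1 g1 _ H1 _ H2|x r y Sr Hx Hy].
- by apply: I0 => p; rewrite /escale mulr0.
- by apply: I_ext (ig_add H1 H2) _ => p; rewrite /escale /eadd mulrDr.
- by rewrite -!emulZl; apply: ig_gen => //; exact: inCQZ.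
Qed.

Lemma IMr f g : I f -> inCQ s t g -> I (emul t f g).
Proof.
move=> If Hg; elim: If => [|f1 g1 _ H1 _ H2|x r y Sr Hx Hy].
- by rewrite emul0l; exact: ig_zero.
- by rewrite emulDl; exact: ig_add.
- by rewrite emulA; apply: ig_gen => //; exact: inCQM.
Qed.

Lemma IMl f g : I f -> inCQ s t g -> I (emul t g f).
Proof.
move=> If Hg; elim: If => [|f1 g1 _ H1 _ H2|x r y Sr Hx Hy].
- by rewrite emul0r; exact: ig_zero.
- by rewrite emulDr; exact: ig_add.
- by rewrite -!emulA; apply: ig_gen => //; exact: inCQM.
Qed.

Lemma eqA_pt f g : (forall p, f p = g p) -> f === g.
Proof. by move=> H; apply: I0 => p; rewrite /eadd /eopp H subrr. Qed.

Lemma eqA_refl f : f === f. Proof. exact: eqA_pt. Qed.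

Lemma eqA_scale c f g : f === g -> escale c f === escale c g.
Proof. by move/(IZ c) => H; apply: I_ext H _ => p; rewrite /escale /eadd /eopp mulrDr mulrN. Qed.

Lemma eqA_sym f g : f === g -> g === f.
Proof. by move/(eqA_scale (-1)) => H; apply: I_ext H _ => p; rewrite /escale /eadd /eopp; ring. Qed.

Lemma eqA_trans f g h : f === g -> g === h -> f === h.
Proof. by move=> H1 H2; apply: I_ext (ig_add H1 H2) _ => p; rewrite /eadd /eopp addrA subrK. Qed.

Lemma eqA_add f f' g g' : f === f' -> g === g' -> eadd f g === eadd f' g'.
Proof. by move=> H1 H2; apply: I_ext (ig_add H1 H2) _ => p; rewrite /eadd /eopp opprD addrACA. Qed.

Lemma eqA_opp f g : f === g -> eopp f === eopp g.
Proof. by move/(eqA_scale (-1)) => H; apply: I_ext H _ => p; rewrite /escale /eadd /eopp; ring. Qed.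

Lemma eqA_mull h f g : inCQ s t h -> f === g -> emul t h f === emul t h g.
Proof. by move=> Hh /IMl /(_ Hh); rewrite emulDr emulNr. Qed.

Lemma eqA_mulr h f g : inCQ s t h -> f === g -> emul t f h === emul t g h.
Proof. by move=> Hh /IMr /(_ Hh); rewrite emulDl emulNl. Qed.

Lemma eqA_sum0 (T : Type) (r : seq T) (F : T -> elt V Ar) :
  (forall i, F i === ezero) -> \big[eadd/ezero]_(i <- r) F i === ezero.
Proof.
move=> H; elim: r => [|i r IH]; rewrite ?big_nil ?big_cons; first exact: eqA_refl.
by apply: eqA_trans (eqA_add (H i) IH) _; apply: eqA_pt => p; rewrite /eadd addr0.
Qed.

End Ideal.

Section Derivations.
Variables (V Ar : finType) (s t : Ar -> V) (S : elt V Ar -> Prop).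
Implicit Types (f g h x : elt V Ar) (D E : elt V Ar -> elt V Ar).
Local Notation I := (ideal_gen s t S).
Local Notation "f === g" := (eqA I f g) (at level 70).
Local Notation DerE := (DerE s t I).
Local Notation Inner := (Inner s t I).
Local Notation hheq := (hheq s t I).

Section OneDerivation.
Variable D : elt V Ar -> elt V Ar.
Hypothesis HD : DerE D.

Lemma Der_in f : inCQ s t f -> inCQ s t (D f). Proof. by case: HD => H _ _; exact: H. Qed.

Lemma Der_compat f g : inCQ s t f -> inCQ s t g -> f === g -> D f === D g.
Proof. by case: HD => _ H _; exact: H. Qed.

Lemma DerD f g : inCQ s t f -> inCQ s t g -> D (eadd f g) === eadd (D f) (D g).
Proof. by case: HD => _ _ [H _ _ _]; exact: H. Qed.

Lemma DerZ c f : inCQ s t f -> D (escale c f) === escale c (D f).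
Proof. by case: HD => _ _ [_ H _ _]; exact: H. Qed.

Lemma DerM f g : inCQ s t f -> inCQ s t g ->
  D (emul t f g) === eadd (emul t (D f) g) (emul t f (D g)).
Proof. by case: HD => _ _ [_ _ H _]; exact: H. Qed.

Lemma Der_evx v : D (evx v) === ezero.
Proof. by case: HD => _ _ [_ _ _ H]; exact: H. Qed.

Lemma Der0 : D ezero === ezero.
Proof.
have := DerZ 0 (inCQ0 s t); rewrite (_ : escale 0 ezero = ezero); last first.
  by apply: elt_ext => p; rewrite /escale mul0r.
by move/eqA_trans; apply; apply: eqA_pt => p; rewrite /escale mul0r.
Qed.

Lemma DerB f g : inCQ s t f -> inCQ s t g ->
  D (eadd f (eopp g)) === eadd (D f) (eopp (D g)).
Proof.
move=> Hf Hg; apply: eqA_trans (DerD Hf (inCQN Hg)) (eqA_add (eqA_refl _ _ _ _) _).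
rewrite (_ : eopp g = escale (-1) g); last by apply: elt_ext => p; rewrite /escale mulN1r.
by apply: eqA_trans (DerZ _ Hg) _; apply: eqA_pt => p; rewrite /escale /eopp mulN1r.
Qed.

Lemma Der_sum (T : Type) (r : seq T) (F : T -> elt V Ar) :
  (forall i, inCQ s t (F i)) ->
  D (\big[eadd/ezero]_(i <- r) F i) === \big[eadd/ezero]_(i <- r) D (F i).
Proof.
move=> HF; elim: r => [|i r IH]; rewrite ?big_nil ?big_cons; first exact: Der0.
apply: eqA_trans (DerD (HF i) (inCQ_sum r HF)) _.
exact: eqA_add (eqA_refl _ _ _ _) IH.
Qed.

Lemma Der_earr_corner b :
  D (earr s b) === emul t (evx (s b)) (emul t (D (earr s b)) (evx (t b))).
Proof.
have Hb := inCQ_earr s t b.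
have Hbt : earr s b = emul t (earr s b) (evx (t b)).
  apply: elt_ext => p; rewrite emul_evxr /earr /edelta.
  by case: eqP => [->|_]; rewrite /= ?eqxx ?if_same.
have Hsb : earr s b = emul t (evx (s b)) (earr s b).
  apply: elt_ext => p; rewrite emul_evxl /earr /edelta.
  by case: eqP => [->|_]; rewrite /= ?eqxx ?if_same.
have HDbt : D (earr s b) === emul t (D (earr s b)) (evx (t b)).
  rewrite {1}Hbt; apply: eqA_trans (DerM Hb (inCQ_evx s t _)) _.
  apply: eqA_trans (eqA_add (eqA_refl _ _ _ _) (eqA_mull Hb (Der_evx _))) _.
  by rewrite emul0r; apply: eqA_pt => p; rewrite /eadd addr0.
rewrite {1}Hsb; apply: eqA_trans (DerM (inCQ_evx s t _) Hb) _.
apply: eqA_trans (eqA_add (eqA_mulr Hb (Der_evx _)) (eqA_mull (inCQ_evx s t _) HDbt)) _.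
by rewrite emul0l; apply: eqA_pt => p; rewrite /eadd add0r.
Qed.

End OneDerivation.

Lemma DerE_ext D E : DerE D -> (forall f, inCQ s t f -> D f = E f) -> DerE E.
Proof.
move=> HD DE; split.
- by move=> f Hf; rewrite -DE //; exact: Der_in.
- by move=> f g Hf Hg Hfg; rewrite -(DE f) // -(DE g) //; exact: Der_compat.
split.
- move=> f g Hf Hg; rewrite -(DE f) // -(DE g) // -DE; [exact: DerD | exact: inCQD].
- move=> c f Hf; rewrite -(DE f) // -DE; [exact: DerZ | exact: inCQZ].
- move=> f g Hf Hg; rewrite -(DE f) // -(DE g) // -DE; [exact: DerM | exact: inCQM].
- by move=> v; rewrite -DE; [exact: Der_evx | exact: inCQ_evx].
Qed.

Lemma DerE_lin c c' D E : DerE D -> DerE E ->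
  DerE (fun f => eadd (escale c (D f)) (escale c' (E f))).
Proof.
move=> HD HE; split.
- by move=> f Hf; apply: inCQD; apply: inCQZ; exact: Der_in.
- by move=> f g Hf Hg Hfg; apply: eqA_add; apply: eqA_scale; exact: Der_compat.
split.
- move=> f g Hf Hg.
  apply: eqA_trans (eqA_add (eqA_scale c (DerD HD Hf Hg)) (eqA_scale c' (DerD HE Hf Hg))) _.
  by apply: eqA_pt => p; rewrite /eadd /escale; ring.
- move=> e f Hf.
  apply: eqA_trans (eqA_add (eqA_scale c (DerZ HD e Hf)) (eqA_scale c' (DerZ HE e Hf))) _.
  by apply: eqA_pt => p; rewrite /eadd /escale; ring.
- move=> f g Hf Hg.
  apply: eqA_trans (eqA_add (eqA_scale c (DerM HD Hf Hg)) (eqA_scale c' (DerM HE Hf Hg))) _.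
  rewrite emulDl emulDr !emulZl !emulZr.
  by apply: eqA_pt => p; rewrite /eadd /escale; ring.
- move=> v; apply: eqA_trans (eqA_add (eqA_scale c (Der_evx HD v)) (eqA_scale c' (Der_evx HE v))) _.
  by apply: eqA_pt => p; rewrite /eadd /escale /ezero; ring.
Qed.

Lemma DerE_add D E : DerE D -> DerE E -> DerE (dadd D E).
Proof.
move=> HD HE; apply: DerE_ext (DerE_lin 1 1 HD HE) _ => f _.
by apply: elt_ext => p; rewrite /dadd /eadd /escale !mul1r.
Qed.

Lemma DerE_scale c D : DerE D -> DerE (dscale c D).
Proof.
move=> HD; apply: DerE_ext (DerE_lin c 0 HD HD) _ => f _.
by apply: elt_ext => p; rewrite /dscale /eadd /escale mul0r addr0.
Qed.

Lemma DerE_sub D E : DerE D -> DerE E -> DerE (fun f => eadd (D f) (eopp (E f))).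
Proof.
move=> HD HE; apply: DerE_ext (DerE_lin 1 (-1) HD HE) _ => f _.
by apply: elt_ext => p; rewrite /eadd /eopp /escale mul1r mulN1r.
Qed.

Lemma Der_comp_compat D E f g : DerE D -> DerE E -> inCQ s t f -> inCQ s t g ->
  E f === g -> D (E f) === D g.
Proof. by move=> HD HE Hf Hg; apply: (Der_compat HD) => //; exact: Der_in. Qed.

Lemma Der_compD D E f g : DerE D -> DerE E -> inCQ s t f -> inCQ s t g ->
  D (E (eadd f g)) === eadd (D (E f)) (D (E g)).
Proof.
move=> HD HE Hf Hg; have HEf := Der_in HE Hf; have HEg := Der_in HE Hg.
apply: eqA_trans (Der_comp_compat HD HE (inCQD Hf Hg) (inCQD HEf HEg) (DerD HE Hf Hg)) _.
exact: (DerD HD).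
Qed.

Lemma Der_compZ D E c f : DerE D -> DerE E -> inCQ s t f ->
  D (E (escale c f)) === escale c (D (E f)).
Proof.
move=> HD HE Hf; have HEf := Der_in HE Hf.
apply: eqA_trans (Der_comp_compat HD HE (inCQZ c Hf) (inCQZ c HEf) (DerZ HE c Hf)) _.
exact: (DerZ HD).
Qed.

(* The mixed terms cancel in the commutator [D, E]. *)
Lemma Der_compM D E f g : DerE D -> DerE E -> inCQ s t f -> inCQ s t g ->
  D (E (emul t f g)) === eadd (eadd (emul t (D (E f)) g) (emul t (E f) (D g)))
                              (eadd (emul t (D f) (E g)) (emul t f (D (E g)))).
Proof.
move=> HD HE Hf Hg; have HEf := Der_in HE Hf; have HEg := Der_in HE Hg.
have Hl := inCQM HEf Hg; have Hr := inCQM Hf HEg.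
apply: eqA_trans (Der_comp_compat HD HE (inCQM Hf Hg) (inCQD Hl Hr) (DerM HE Hf Hg)) _.
by apply: eqA_trans (DerD HD Hl Hr) _; apply: eqA_add; exact: (DerM HD).
Qed.

Lemma DerE_br D E : DerE D -> DerE E -> DerE (dbr D E).
Proof.
move=> HD HE; rewrite /dbr; split.
- by move=> f Hf; apply: inCQD; [|apply: inCQN]; do 2 apply: Der_in => //.
- move=> f g Hf Hg Hfg; apply: eqA_add; [|apply: eqA_opp]; apply: Der_compat;
    by [|exact: Der_in|exact: Der_compat].
split.
- move=> f g Hf Hg.
  apply: eqA_trans (eqA_add (Der_compD HD HE Hf Hg) (eqA_opp (Der_compD HE HD Hf Hg))) _.
  by apply: eqA_pt => p; rewrite /eadd /eopp; ring.
- move=> c f Hf.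
  apply: eqA_trans (eqA_add (Der_compZ c HD HE Hf) (eqA_opp (Der_compZ c HE HD Hf))) _.
  by apply: eqA_pt => p; rewrite /eadd /eopp /escale; ring.
- move=> f g Hf Hg.
  apply: eqA_trans (eqA_add (Der_compM HD HE Hf Hg) (eqA_opp (Der_compM HE HD Hf Hg))) _.
  rewrite emulDl emulDr !emulNl !emulNr.
  by apply: eqA_pt => p; rewrite /eadd /eopp; ring.
- move=> v; have Hvv := Der_comp_compat _ _ (inCQ_evx s t v) (inCQ0 s t) (Der_evx _ v).
  apply: eqA_trans (eqA_add (eqA_trans (Hvv _ _ HD HE HE) (Der0 HD))
                            (eqA_opp (eqA_trans (Hvv _ _ HE HD HD) (Der0 HE)))) _.
  by apply: eqA_pt => p; rewrite /eadd /eopp /ezero; ring.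
Qed.

Lemma Inner_ext D E : (forall f, inCQ s t f -> D f === E f) -> Inner D -> Inner E.
Proof.
move=> H [x Hx Hin]; exists x => // f Hf.
exact: eqA_trans (eqA_sym (H f Hf)) (Hin f Hf).
Qed.

Lemma Inner0 D : (forall f, inCQ s t f -> D f === ezero) -> Inner D.
Proof.
move=> H; exists ezero => // f Hf; rewrite emul0l emul0r.
by apply: eqA_trans (H f Hf) _; apply: eqA_pt => p; rewrite /eadd /eopp oppr0 addr0.
Qed.

Lemma InnerD D E : Inner D -> Inner E -> Inner (fun f => eadd (D f) (E f)).
Proof.
move=> [x Hx H] [y Hy H']; exists (eadd x y); first exact: inCQD.
move=> f Hf; apply: eqA_trans (eqA_add (H f Hf) (H' f Hf)) _.
by rewrite emulDl emulDr; apply: eqA_pt => p; rewrite /eadd /eopp; ring.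
Qed.

Lemma InnerZ c D : Inner D -> Inner (fun f => escale c (D f)).
Proof.
move=> [x Hx H]; exists (escale c x); first exact: inCQZ.
move=> f Hf; apply: eqA_trans (eqA_scale c (H f Hf)) _.
by rewrite emulZl emulZr; apply: eqA_pt => p; rewrite /eadd /eopp /escale; ring.
Qed.

(* [D, ad x] = ad (D x) *)
Lemma Inner_br D E : DerE D -> DerE E -> Inner E -> Inner (dbr D E).
Proof.
move=> HD HE [x Hx H]; exists (D x); first exact: Der_in.
move=> f Hf; have Hxf := inCQM Hx Hf; have Hfx := inCQM Hf Hx.
have HDE : D (E f) === eadd (eadd (emul t (D x) f) (emul t x (D f)))
                            (eopp (eadd (emul t (D f) x) (emul t f (D x)))).
  apply: eqA_trans (Der_comp_compat HD HE Hf (inCQD Hxf (inCQN Hfx)) (H f Hf)) _.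
  apply: eqA_trans (DerB HD Hxf Hfx) _.
  by apply: eqA_add; [|apply: eqA_opp]; exact: (DerM HD).
apply: eqA_trans (eqA_add HDE (eqA_opp (H (D f) (Der_in HD Hf)))) _.
by apply: eqA_pt => p; rewrite /eadd /eopp; ring.
Qed.

Lemma hheq_pt D E : (forall f, inCQ s t f -> forall p, D f p = E f p) -> hheq D E.
Proof. by move=> H; apply: Inner0 => f Hf; apply: eqA_pt => p; rewrite /eadd /eopp H // subrr. Qed.

Lemma hheq_trans D E F : hheq D E -> hheq E F -> hheq D F.
Proof.
move=> H1 H2; move: (InnerD H1 H2); apply: Inner_ext => f _.
by apply: eqA_pt => p; rewrite /eadd /eopp; ring.
Qed.

Lemma hheq_add D D' E E' : hheq D D' -> hheq E E' -> hheq (dadd D E) (dadd D' E').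
Proof.
move=> H1 H2; move: (InnerD H1 H2); apply: Inner_ext => f _.
by apply: eqA_pt => p; rewrite /dadd /eadd /eopp; ring.
Qed.

Lemma hheq_scale c D D' : hheq D D' -> hheq (dscale c D) (dscale c D').
Proof.
move=> /(InnerZ c); apply: Inner_ext => f _.
by apply: eqA_pt => p; rewrite /dscale /eadd /eopp /escale; ring.
Qed.

Lemma hheq_br_l D D' E : DerE D -> DerE D' -> DerE E ->
  hheq D D' -> hheq (dbr D E) (dbr D' E).
Proof.
move=> HD HD' HE H; move: (InnerZ (-1) (Inner_br HE (DerE_sub HD HD') H)).
apply: Inner_ext => f Hf; rewrite /dbr.
apply: eqA_trans (eqA_scale _ (eqA_add (DerB HE (Der_in HD Hf) (Der_in HD' Hf))
                                       (eqA_refl _ _ _ _))) _.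
by apply: eqA_pt => p; rewrite /eadd /eopp /escale; ring.
Qed.

Lemma hheq_br D D' E E' : DerE D -> DerE D' -> DerE E -> DerE E' ->
  hheq D D' -> hheq E E' -> hheq (dbr D E) (dbr D' E').
Proof.
move=> HD HD' HE HE' H1 H2; apply: hheq_trans (hheq_br_l HD HD' HE H1) _.
move: (InnerZ (-1) (hheq_br_l HE HE' HD' H2)); apply: Inner_ext => f _.
by apply: eqA_pt => p; rewrite /dbr /eadd /eopp /escale; ring.
Qed.

End Derivations.

Section DeterminedByArrows.
Variables (V Ar : finType) (s t : Ar -> V) (S : elt V Ar -> Prop).
Implicit Types (f g : elt V Ar) (D E : elt V Ar -> elt V Ar).
Local Notation I := (ideal_gen s t S).
Local Notation "f === g" := (eqA I f g) (at level 70).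

Lemma emul_earrl b g v l : emul t (earr s b) g (v, l) =
  if l is c :: l' then (if (s b == v) && (b == c) then g (t b, l') else 0) else 0.
Proof.
case: l => [|c l].
  by rewrite /emul big_ord_recl big_ord0 /= /earr /edelta /= xpair_eqE andbF mul0r addr0.
rewrite /emul big_ord_recl big_ord_recl /= big1 ?addr0.
  rewrite /earr /edelta /= xpair_eqE andbF mul0r add0r.
  rewrite add0n take0 drop0 xpair_eqE eqseq_cons eqxx andbT [v == _]eq_sym [c == _]eq_sym /=.
  by case: andP => [[/eqP Hv /eqP Hc]|]; rewrite ?mul1r ?mul0r // -Hc.
move=> k _; rewrite /earr /edelta /= add0n xpair_eqE /= eqseq_cons.
have -> : (take (bump 0 k) l == [::]) = false.
  by apply/negbTE; rewrite -size_eq0 size_takel // /bump /=; exact: ltn_ord.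
by rewrite !andbF mul0r.
Qed.

Definition arrow_tail (b : Ar) f : elt V Ar :=
  fun q => if q.1 == t b then f (s b, b :: q.2) else 0.

Lemma inCQ_arrow_tail b f : inCQ s t f -> inCQ s t (arrow_tail b f).
Proof.
move=> Hf [v l] /= Hp; rewrite /arrow_tail /=; case: eqP => // Ev.
by rewrite Hf // pvalid_cons eqxx -Ev.
Qed.

Lemma elt_decomp f : inCQ s t f ->
  f = eadd (\big[eadd/ezero]_(v <- enum V) escale (f (v, [::])) (evx v))
           (\big[eadd/ezero]_(b <- enum Ar) emul t (earr s b) (arrow_tail b f)).
Proof.
move=> Hf; apply: elt_ext => -[v l]; rewrite /eadd !esumE.
case: l => [|c l].
  rewrite [X in _ + X]big1 ?addr0; last by move=> b _; rewrite emul_earrl.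
  rewrite (bigD1_seq v) ?mem_enum ?enum_uniq //= big1_seq ?addr0.
    by rewrite /escale /evx /edelta eqxx mulr1.
  move=> u /andP [Hu _]; rewrite /escale /evx /edelta xpair_eqE andbT eq_sym.
  by rewrite (negbTE Hu) mulr0.
rewrite [X in X + _]big1_seq ?add0r; last first.
  by move=> u _; rewrite /escale /evx /edelta xpair_eqE andbF mulr0.
rewrite (bigD1_seq c) ?mem_enum ?enum_uniq //= big1_seq ?addr0; last first.
  by move=> b /andP [Hb _]; rewrite emul_earrl (negbTE Hb) andbF.
rewrite emul_earrl eqxx andbT /arrow_tail /= eqxx.
case: eqP => [-> //|Hv]; rewrite Hf // pvalid_cons.
by apply/negP => /andP [/eqP ? _].
Qed.

Section Vanishing.
Variable E : elt V Ar -> elt V Ar.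
Hypotheses (HE : DerE s t I E) (Harr : forall b, E (earr s b) === ezero).

Lemma Der_vanish_bounded n f : inCQ s t f ->
  (forall p, (n <= size p.2)%N -> f p = 0) -> E f === ezero.
Proof.
elim: n f => [|n IH] f Hf Hn.
  by rewrite (_ : f = ezero); [exact: Der0 | apply: elt_ext => p; rewrite Hn].
have Hvx v : inCQ s t (escale (f (v, [::])) (evx v)) by exact/inCQZ/inCQ_evx.
have Htl b : inCQ s t (arrow_tail b f) by exact: inCQ_arrow_tail.
have Hstep b : inCQ s t (emul t (earr s b) (arrow_tail b f)) by exact/inCQM/Htl/inCQ_earr.
rewrite (elt_decomp Hf).
apply: eqA_trans (DerD HE (inCQ_sum _ Hvx) (inCQ_sum _ Hstep)) _.
apply: eqA_trans (eqA_add (Der_sum HE _ Hvx) (Der_sum HE _ Hstep)) _.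
have Hvx0 v : E (escale (f (v, [::])) (evx v)) === ezero.
  apply: eqA_trans (DerZ HE _ (inCQ_evx s t v)) _.
  apply: eqA_trans (eqA_scale _ (Der_evx HE v)) _.
  by apply: eqA_pt => p; rewrite /escale mulr0.
have Hstep0 b : E (emul t (earr s b) (arrow_tail b f)) === ezero.
  apply: eqA_trans (DerM HE (inCQ_earr s t b) (Htl b)) _.
  have Htail : E (arrow_tail b f) === ezero.
    by apply: IH (Htl b) _ => p Hp; rewrite /arrow_tail Hn ?if_same.
  apply: eqA_trans (eqA_add (eqA_mulr (Htl b) (Harr b))
                            (eqA_mull (inCQ_earr s t b) Htail)) _.
  by rewrite emul0l emul0r; apply: eqA_pt => p; rewrite /eadd addr0.
apply: eqA_trans (eqA_add (eqA_sum0 _ Hvx0) (eqA_sum0 _ Hstep0)) _.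
by apply: eqA_pt => p; rewrite /eadd addr0.
Qed.

Lemma Der_vanish : (exists m, forall f, inCQ s t f -> inRpow m f -> I f) ->
  forall f, inCQ s t f -> E f === ezero.
Proof.
move=> [m Hm] f Hf.
pose fm : elt V Ar := fun p => if (size p.2 < m)%N then f p else 0.
have Hfm : inCQ s t fm by move=> p Hp; rewrite /fm Hf //; case: ifP.
have Hffm : f === fm.
  apply: Hm; first exact/inCQD/inCQN.
  by move=> p Hp; rewrite /eadd /eopp /fm Hp subrr.
apply: eqA_trans (Der_compat HE Hf Hfm Hffm) _.
by apply: (@Der_vanish_bounded m) => // p Hp; rewrite /fm ltnNge Hp.
Qed.

End Vanishing.

Lemma hheq_of_arrows D D' :
  (exists m, forall f, inCQ s t f -> inRpow m f -> I f) ->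
  DerE s t I D -> DerE s t I D' ->
  (forall b, D (earr s b) === D' (earr s b)) -> hheq s t I D D'.
Proof.
move=> Hm HD HD' Hb; apply: Inner0; apply: (Der_vanish (DerE_sub HD HD')) Hm => b.
by apply: I_ext (Hb b) _ => p; rewrite /eadd /eopp oppr0 addr0.
Qed.

End DeterminedByArrows.

Section ArrowCoordinates.
Variables (V Ar : finType) (o : V) (a : nat) (alpha : 'I_a -> Ar).
Hypothesis Hinj : injective alpha.
Implicit Types (f g : elt V Ar) (r : 'rV[CC]_a) (N : 'M[CC]_a).

Definition arrow_coords f : 'rV[CC]_a := \row_i f (o, [:: alpha i]).

Definition arrow_elt r : elt V Ar :=
  \big[eadd/ezero]_(q < a) escale (r 0 q) (edelta (o, [:: alpha q])).

(* alpha i |-> sum_j N i j alpha j, and zero on every other path; N acts on coordinate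
   rows, so composition reverses the matrix product (mxder_comp). *)
Definition mxder N f : elt V Ar := arrow_elt (arrow_coords f *m N).

Lemma alpha_path_eq i j : ((o, [:: alpha i]) == (o, [:: alpha j]) :> qpath V Ar) = (i == j).
Proof. by rewrite xpair_eqE eqxx /= eqseq_cons andbT (inj_eq Hinj). Qed.

Lemma arrow_eltE r p :
  arrow_elt r p = \sum_(q < a) (if p == (o, [:: alpha q]) then r 0 q else 0).
Proof.
rewrite /arrow_elt esumE; apply: eq_bigr => q _.
by rewrite /escale /edelta; case: ifP; rewrite ?mulr1 ?mulr0.
Qed.

Lemma arrow_elt_alpha r j : arrow_elt r (o, [:: alpha j]) = r 0 j.
Proof.
rewrite arrow_eltE (bigD1 j) //= eqxx big1 ?addr0 // => q /negbTE.
by rewrite alpha_path_eq eq_sym => ->.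
Qed.

Lemma arrow_elt_out r p : (forall q, p != (o, [:: alpha q])) -> arrow_elt r p = 0.
Proof. by move=> Hp; rewrite arrow_eltE big1 // => q _; rewrite (negbTE (Hp q)). Qed.

Lemma arrow_coords_elt r : arrow_coords (arrow_elt r) = r.
Proof. by apply/rowP => j; rewrite mxE arrow_elt_alpha. Qed.

Lemma arrow_eltD r r' : arrow_elt (r + r') = eadd (arrow_elt r) (arrow_elt r').
Proof.
apply: elt_ext => p; rewrite /eadd !arrow_eltE -big_split; apply: eq_bigr => q _ /=.
by rewrite mxE; case: ifP; rewrite ?addr0.
Qed.

Lemma arrow_eltZ c r : arrow_elt (c *: r) = escale c (arrow_elt r).
Proof.
apply: elt_ext => p; rewrite /escale !arrow_eltE mulr_sumr; apply: eq_bigr => q _.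
by rewrite mxE; case: ifP; rewrite ?mulr0.
Qed.

Lemma arrow_eltN r : arrow_elt (- r) = eopp (arrow_elt r).
Proof.
rewrite -scaleN1r arrow_eltZ.
by apply: elt_ext => p; rewrite /escale /eopp mulN1r.
Qed.

Lemma arrow_elt0 : arrow_elt 0 = ezero.
Proof. by apply: elt_ext => p; rewrite arrow_eltE big1 // => q _; rewrite mxE if_same. Qed.

Lemma arrow_coordsD f g : arrow_coords (eadd f g) = arrow_coords f + arrow_coords g.
Proof. by apply/rowP => j; rewrite !mxE. Qed.

Lemma arrow_coordsZ c f : arrow_coords (escale c f) = c *: arrow_coords f.
Proof. by apply/rowP => j; rewrite !mxE. Qed.

Lemma mxder_comp N N' f : mxder N (mxder N' f) = mxder (N' *m N) f.
Proof. by rewrite /mxder arrow_coords_elt mulmxA. Qed.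

Lemma mxderD N N' f : mxder (N + N') f = eadd (mxder N f) (mxder N' f).
Proof. by rewrite /mxder mulmxDr arrow_eltD. Qed.

Lemma mxderZ c N f : mxder (c *: N) f = escale c (mxder N f).
Proof. by rewrite /mxder -scalemxAr arrow_eltZ. Qed.

Lemma mxderB N N' f : mxder (N - N') f = eadd (mxder N f) (eopp (mxder N' f)).
Proof. by rewrite /mxder mulmxDr mulmxN arrow_eltD arrow_eltN. Qed.

Lemma mxder0 f : mxder 0 f = ezero.
Proof. by rewrite /mxder mulmx0 arrow_elt0. Qed.

End ArrowCoordinates.

Section ArrowMatrixDerivation.
Variables (V Ar : finType) (s t : Ar -> V) (S : elt V Ar -> Prop).
Variables (o w : V) (a : nat) (alpha : 'I_a -> Ar).
Hypotheses (Hs : forall q, s (alpha q) = o) (Ht : forall q, t (alpha q) = w).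
Hypotheses (Hno : forall b, t b != o) (Hnw : forall b, s b != w).
Hypothesis Hinj : injective alpha.
Hypothesis HI2 : forall f, ideal_gen s t S f -> inRpow 2 f.
Implicit Types (f g : elt V Ar) (r : 'rV[CC]_a) (N : 'M[CC]_a).
Local Notation I := (ideal_gen s t S).
Local Notation "f === g" := (eqA I f g) (at level 70).
Local Notation arrow_coords := (arrow_coords o alpha).
Local Notation arrow_elt := (arrow_elt o alpha).
Local Notation mxder := (mxder o alpha).

Lemma inCQ_arrow_elt r : inCQ s t (arrow_elt r).
Proof. by apply: inCQ_sum => q; apply/inCQZ/inCQ_delta; rewrite /pvalid /= Hs eqxx. Qed.

Lemma arrow_coords_eqA f g : f === g -> arrow_coords f = arrow_coords g.
Proof.
move=> /HI2 Hfg; apply/rowP => j; rewrite !mxE.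
by apply/eqP; rewrite -subr_eq0; apply/eqP; exact: (Hfg (o, [:: alpha j])).
Qed.

Lemma arrow_coords_evx v : arrow_coords (evx v) = 0.
Proof. by apply/rowP => j; rewrite !mxE /evx /edelta xpair_eqE andbF. Qed.

Lemma arrow_coordsM f g :
  arrow_coords (emul t f g) = f (o, [::]) *: arrow_coords g + g (w, [::]) *: arrow_coords f.
Proof. by apply/rowP => j; rewrite !mxE emul_len1 Ht [g _ * _]mulrC. Qed.

Lemma earr_alpha q : earr s (alpha q) = edelta (o, [:: alpha q]).
Proof. by rewrite /earr Hs. Qed.

Lemma arrow_elt_delta q : arrow_elt (delta_mx 0 q) = earr s (alpha q).
Proof.
apply: elt_ext => p; rewrite earr_alpha arrow_eltE /edelta.
rewrite (bigD1 q) //= mxE !eqxx big1 ?addr0 => [|k /negbTE Hk]; first by case: ifP.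
by rewrite mxE eq_sym Hk andbF if_same.
Qed.

Lemma arrow_coords_earr k : arrow_coords (earr s (alpha k)) = delta_mx 0 k.
Proof.
by apply/rowP => j; rewrite !mxE earr_alpha /edelta (alpha_path_eq o Hinj) eq_sym; case: eqP.
Qed.

Lemma arrow_coords_earr_out b : b \notin codom alpha -> arrow_coords (earr s b) = 0.
Proof.
move=> Hb; apply/rowP => j; rewrite !mxE /earr /edelta xpair_eqE /= eqseq_cons andbT.
case: (alpha j =P b) => [Eb|]; last by rewrite andbF.
by case/negP: Hb; rewrite -Eb codom_f.
Qed.

Lemma mxder_earr N k : mxder N (earr s (alpha k)) = arrow_elt (delta_mx 0 k *m N).
Proof. by rewrite /mxder arrow_coords_earr. Qed.

Lemma mxder_earr_out N b : b \notin codom alpha -> mxder N (earr s b) = ezero.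
Proof. by move=> Hb; rewrite /mxder arrow_coords_earr_out // mul0mx arrow_elt0. Qed.

Lemma emul_deltal q g : inCQ s t g ->
  emul t (edelta (o, [:: alpha q])) g = escale (g (w, [::])) (edelta (o, [:: alpha q])).
Proof.
move=> Hg; rewrite -earr_alpha; apply: elt_ext => -[v l].
rewrite emul_earrl /escale /earr /edelta Hs Ht xpair_eqE /= [o == v]eq_sym.
case: l => [|c [|d l]]; rewrite ?andbF ?mulr0 // eqseq_cons ?andbT [c == _]eq_sym.
  by case: ifP; rewrite ?mulr1 ?mulr0.
rewrite /= !andbF mulr0; case: ifP => // _.
by rewrite Hg // pvalid_cons (negbTE (Hnw d)).
Qed.

Lemma emul_deltar q f :
  emul t f (edelta (o, [:: alpha q])) = escale (f (o, [::])) (edelta (o, [:: alpha q])).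
Proof.
apply: elt_ext => -[v l]; rewrite /emul big_ord_recl /= take0 drop0 big1 ?addr0.
  by rewrite /escale /edelta /ptgt /=; case: eqP => [[-> _]|]; rewrite ?mulr1 ?mulr0.
move=> k _; rewrite /edelta.
case El: (take (bump 0 k) l) => [|c l'].
  by move: (congr1 size El); rewrite size_takel // /bump /=; exact: ltn_ord.
rewrite xpair_eqE /ptgt /= last_map (negbTE (Hno _)) /= mulr0 //.
Qed.

Lemma emul_arrow_eltl r g : inCQ s t g ->
  emul t (arrow_elt r) g = escale (g (w, [::])) (arrow_elt r).
Proof.
move=> Hg; rewrite /arrow_elt emul_suml; apply: elt_ext => p.
rewrite esumE [RHS]/escale esumE mulr_sumr; apply: eq_bigr => q _.
by rewrite emulZl emul_deltal // /escale mulrCA.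
Qed.

Lemma emul_arrow_eltr r f :
  emul t f (arrow_elt r) = escale (f (o, [::])) (arrow_elt r).
Proof.
rewrite /arrow_elt emul_sumr; apply: elt_ext => p.
rewrite esumE [RHS]/escale esumE mulr_sumr; apply: eq_bigr => q _.
by rewrite emulZr emul_deltar /escale mulrCA.
Qed.

Lemma DerE_mxder N : DerE s t I (mxder N).
Proof.
split=> [f _|f g _ _ Hfg|]; first exact: inCQ_arrow_elt.
  by rewrite /mxder (arrow_coords_eqA Hfg); exact: eqA_refl.
split=> [f g _ _|c f _|f g Hf Hg|v]; apply: eqA_pt => p; rewrite /mxder.
- by rewrite arrow_coordsD mulmxDl arrow_eltD.
- by rewrite arrow_coordsZ -scalemxAl arrow_eltZ.
- rewrite emul_arrow_eltl // emul_arrow_eltr arrow_coordsM mulmxDl -!scalemxAl.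
  by rewrite arrow_eltD !arrow_eltZ /eadd addrC.
- by rewrite arrow_coords_evx mul0mx arrow_elt0.
Qed.

Lemma mxder_inner N : Inner s t I (mxder N) -> exists c, N = c%:M.
Proof.
move=> [x Hx H]; exists (x (o, [::]) - x (w, [::])); apply/matrixP => i j.
have := HI2 (H _ (inCQ_earr s t (alpha i))) (p := (o, [:: alpha j])) isT.
rewrite /eadd /eopp mxder_earr (arrow_elt_alpha o Hinj) !emul_len1 Ht -rowE !mxE.
rewrite earr_alpha /edelta (alpha_path_eq o Hinj) !xpair_eqE !andbF [j == i]eq_sym.
by case: (i == j) => /= /eqP; rewrite subr_eq0 => /eqP ->; rewrite ?mulr1n ?mulr0n; ring.
Qed.

End ArrowMatrixDerivation.

Section Kronecker.
Variable a : nat.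
Implicit Types (f g : elt bool 'I_a) (D E : elt bool 'I_a -> elt bool 'I_a) (N : 'M[CC]_a).
Local Notation ks := (kron_s a).
Local Notation kt := (kron_t a).
Local Notation KI := (kron_I a).
Local Notation kder := (mxder false (@id 'I_a)).
Local Notation "f === g" := (eqA KI f g) (at level 70).

Let kron_src q : ks (id q) = false := erefl.
Let kron_tgt q : kt (id q) = true := erefl.
Local Notation kron_inj := (@inj_id 'I_a).

Lemma kron_I0 f : KI f -> forall p, f p = 0.
Proof. by elim=> // h1 h2 _ H1 _ H2 p; rewrite /eadd H1 H2 addr0. Qed.

Lemma kron_eqA f g : eqA KI f g -> f = g.
Proof.
by move=> /kron_I0 Hfg; apply: elt_ext => p; apply/eqP; rewrite -subr_eq0; apply/eqP; exact: Hfg.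
Qed.

Lemma kron_pvalid_long v i j l : pvalid ks kt (v, i :: j :: l) = false.
Proof. by rewrite !pvalid_cons /= andbF. Qed.

Lemma kron_adm : exists m, forall f, inCQ ks kt f -> inRpow m f -> KI f.
Proof.
exists 2%N => f Hf Hr; apply: I0 => -[v [|i [|j l]]]; try exact: Hr.
by apply: Hf; rewrite kron_pvalid_long.
Qed.

Lemma kron_R2 f : KI f -> inRpow 2 f.
Proof. by move=> /kron_I0 Hf p _; exact: Hf. Qed.

Lemma DerE_kder N : DerE ks kt KI (kder N).
Proof. exact: (DerE_mxder kron_src kron_tgt (fun _ => erefl) (fun _ => erefl) kron_R2). Qed.

Definition kron_mx D : 'M[CC]_a := \matrix_(i, j) D (earr ks i) (false, [:: j]).

Lemma kron_mx_kder N : kron_mx (kder N) = N.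
Proof.
apply/matrixP => i j; rewrite mxE (mxder_earr kron_src kron_inj).
by rewrite (arrow_elt_alpha _ kron_inj) -rowE mxE.
Qed.

Lemma kron_der_earr D i : DerE ks kt KI D -> D (earr ks i) = kder (kron_mx D) (earr ks i).
Proof.
move=> HD; apply: elt_ext => p; rewrite (kron_eqA (Der_earr_corner HD i)).
rewrite emul_evxl emul_evxr (mxder_earr kron_src kron_inj) /=.
case: p => [[] [|j [|k l]]] /=; try by rewrite arrow_elt_out.
- by rewrite (arrow_elt_alpha _ kron_inj) -rowE !mxE.
- rewrite (Der_in HD (inCQ_earr ks kt i)) ?kron_pvalid_long // if_same arrow_elt_out //.
  by move=> q; rewrite xpair_eqE eqseq_cons andbF.
Qed.

Lemma kron_der_mxder D f : DerE ks kt KI D -> inCQ ks kt f -> D f = kder (kron_mx D) f.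
Proof.
move=> HD Hf; have HE := DerE_sub HD (DerE_kder (kron_mx D)).
have Harr i : eadd (D (earr ks i)) (eopp (kder (kron_mx D) (earr ks i))) === ezero.
  by rewrite -kron_der_earr //; apply: eqA_pt => p; rewrite /eadd /eopp subrr.
move: (Der_vanish HE Harr kron_adm Hf) => /kron_eqA /(congr1 (fun h => h _)) H0.
by apply: elt_ext => p; apply/eqP; rewrite -subr_eq0; apply/eqP; exact: H0.
Qed.

Lemma kron_mx_ext D E : (forall f, inCQ ks kt f -> D f = E f) -> kron_mx D = kron_mx E.
Proof. by move=> H; apply/matrixP => i j; rewrite !mxE H //; exact: inCQ_earr. Qed.

Lemma kron_mxD D E : kron_mx (dadd D E) = kron_mx D + kron_mx E.
Proof. by apply/matrixP => i j; rewrite !mxE. Qed.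

Lemma kron_mxZ c D : kron_mx (dscale c D) = c *: kron_mx D.
Proof. by apply/matrixP => i j; rewrite !mxE. Qed.

Lemma kron_mxB D E : kron_mx (fun f => eadd (D f) (eopp (E f))) = kron_mx D - kron_mx E.
Proof. by apply/matrixP => i j; rewrite !mxE. Qed.

Lemma kron_mx_br D E : DerE ks kt KI D -> DerE ks kt KI E ->
  kron_mx (dbr D E) = kron_mx E *m kron_mx D - kron_mx D *m kron_mx E.
Proof.
move=> HD HE; rewrite -[RHS]kron_mx_kder; apply: kron_mx_ext => f Hf.
have HDf := kron_der_mxder HD; have HEf := kron_der_mxder HE.
rewrite /dbr (HDf _ (Der_in HE Hf)) (HEf _ (Der_in HD Hf)) (HEf _ Hf) (HDf _ Hf).
by rewrite !(mxder_comp _ kron_inj) -mxderB.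
Qed.

Lemma kron_inner_scalar D : DerE ks kt KI D -> Inner ks kt KI D -> exists c, kron_mx D = c%:M.
Proof.
move=> HD HI; apply: (mxder_inner kron_src kron_tgt kron_inj kron_R2).
by apply: Inner_ext HI => f Hf; rewrite (kron_der_mxder HD Hf); exact: eqA_refl.
Qed.

(* the inner derivation of c times the idempotent of the source vertex *)
Lemma kder_scalar_inner c : Inner ks kt KI (kder c%:M).
Proof.
exists (escale c (evx false)); first exact/inCQZ/inCQ_evx.
move=> f Hf; apply: eqA_pt => p.
rewrite /eadd /eopp emulZl emulZr /escale emul_evxl emul_evxr.
rewrite /mxder mul_mx_scalar arrow_eltZ /escale.
case: p => [[] [|j [|k l]]]; rewrite /ptgt /=; try by rewrite arrow_elt_out ?mulr0 ?subrr.
- rewrite (Hf (true, [:: j, k & l])) ?kron_pvalid_long //.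
  by rewrite if_same mulr0 subrr arrow_elt_out ?mulr0.
- by rewrite (arrow_elt_alpha _ kron_inj) mxE mulr0 subr0.
- rewrite (Hf (false, [:: j, k & l])) ?kron_pvalid_long //.
  rewrite if_same mulr0 subrr arrow_elt_out ?mulr0 //.
  by move=> q; rewrite xpair_eqE eqseq_cons andbF.
Qed.

Lemma kron_scalar_inner D c : DerE ks kt KI D -> kron_mx D = c%:M -> Inner ks kt KI D.
Proof.
move=> HD HN; apply: Inner_ext (kder_scalar_inner c) => f Hf.
by rewrite (kron_der_mxder HD Hf) HN; exact: eqA_refl.
Qed.

End Kronecker.

Section Traceless.
Variables (F : numFieldType) (n : nat).
Implicit Types (A B : 'M[F]_n).

Definition traceless A : 'M[F]_n := A - (\tr A / n%:R)%:M.

Lemma dim0_mx_eq A B : n = 0%N -> A = B.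
Proof. by move=> n0; apply/matrixP => i; have : (i < n)%N := ltn_ord i; rewrite {2}n0. Qed.

Lemma mxtrace_traceless A : \tr (traceless A) = 0.
Proof.
have [n0|n_gt0] := posnP n; first by rewrite (dim0_mx_eq (traceless A) 0 n0) mxtrace0.
rewrite /traceless raddfB /= mxtrace_scalar -(mulr_natr (\tr A / _)).
by rewrite divfK ?subrr // pnatr_eq0 -lt0n.
Qed.

Lemma traceless_id A : \tr A = 0 -> traceless A = A.
Proof. by move=> trA; rewrite /traceless trA mul0r raddf0 subr0. Qed.

Lemma tracelessD A B : traceless (A + B) = traceless A + traceless B.
Proof. by rewrite /traceless mxtraceD mulrDl raddfD /= opprD addrACA. Qed.

Lemma tracelessZ c A : traceless (c *: A) = c *: traceless A.
Proof. by rewrite /traceless mxtraceZ -mulrA scalerBr scale_scalar_mx. Qed.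

Lemma traceless_scalar c : traceless c%:M = 0.
Proof.
have [n0|n_gt0] := posnP n; first exact: dim0_mx_eq.
by rewrite /traceless mxtrace_scalar -(mulr_natr c) mulfK ?subrr // pnatr_eq0 -lt0n.
Qed.

Lemma traceless_eq_scalar A B c : A - B = c%:M -> traceless A = traceless B.
Proof. by move=> AB; rewrite -(subrK B A) AB tracelessD traceless_scalar add0r. Qed.

Lemma traceless_scalar_inv A c : traceless A = c%:M -> A = (c + \tr A / n%:R)%:M.
Proof. by move=> Ac; rewrite raddfD /= -Ac subrK. Qed.

Lemma commutator_scalar_shift A B a b :
  (A - a%:M) *m (B - b%:M) - (B - b%:M) *m (A - a%:M) = A *m B - B *m A.
Proof.
rewrite !mulmxBl !mulmxBr !mul_mx_scalar !mul_scalar_mx !scale_scalar_mx [b * a]mulrC.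
by apply/matrixP => i j; rewrite !mxE; ring.
Qed.

Lemma traceless_commutator A B :
  traceless (A *m B - B *m A) = traceless A *m traceless B - traceless B *m traceless A.
Proof.
by rewrite commutator_scalar_shift traceless_id // raddfB /= mxtrace_mulC subrr.
Qed.
End Traceless.

Section TraceZeroSpan.
Variables (R : pzRingType) (n : nat).
Implicit Types (A : 'M[R]_n).

Lemma mxtrace_delta (i j : 'I_n) : \tr (delta_mx i j : 'M[R]_n) = (i == j)%:R.
Proof.
rewrite /mxtrace (bigD1 i) //= big1 ?addr0 => [|k /negbTE ki]; first by rewrite mxE eqxx.
by rewrite mxE ki.
Qed.

Lemma trace0_decomp (i1 : 'I_n) A : \tr A = 0 ->
  A = \sum_(i < n) \sum_(j < n)
        (if i == j then A i i *: (delta_mx i i - delta_mx i1 i1) else A i j *: delta_mx i j).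
Proof.
move=> trA.
have row_i i : \sum_(j < n) (if i == j then A i i *: (delta_mx i i - delta_mx i1 i1)
                              else A i j *: delta_mx i j)
              = \sum_(j < n) A i j *: delta_mx i j - A i i *: delta_mx i1 i1.
  rewrite (bigD1 i) //= eqxx [in RHS](bigD1 i) //= scalerBr addrAC; congr (_ + _ - _).
  by apply: eq_bigr => j /negbTE; rewrite eq_sym => ->.
rewrite (eq_bigr _ (fun i _ => row_i i)) sumrB -matrix_sum_delta -scaler_suml.
by rewrite -/(\tr A) trA scale0r subr0.
Qed.

End TraceZeroSpan.

(* The classes w_pq (first disjunct) and x_j (second), with alpha^(k+1) = alpha k. *)
Definition toupie_gens (V Ar : finType) (s t : Ar -> V) (rels : elt V Ar -> Prop)
    (a : nat) (alpha : 'I_a -> Ar) (D : elt V Ar -> elt V Ar) : Prop :=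
  let I := ideal_gen s t rels in
    (exists p q : 'I_a, p != q /\
       on_arrows s t I D (fun b => if b == alpha p then earr s (alpha q) else ezero))
    \/
    (exists j i1 : 'I_a, [/\ val i1 = 0%N, (0 < val j)%N &
       on_arrows s t I D (fun b =>
         if b == alpha j then earr s (alpha j)
         else if b == alpha i1 then eopp (earr s (alpha i1)) else ezero)]).

Section GeneratedLieSubalgebra.
Variables (V Ar : finType) (s t : Ar -> V) (o w : V) (rels : elt V Ar -> Prop).
Variables (a : nat) (alpha : 'I_a -> Ar).
Hypotheses (Hs : forall q, s (alpha q) = o) (Ht : forall q, t (alpha q) = w).
Hypotheses (Hno : forall b, t b != o) (Hnw : forall b, s b != w).
Hypothesis Hinj : injective alpha.
Hypothesis HI2 : forall f, ideal_gen s t rels f -> inRpow 2 f.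
Hypothesis Hm : exists m, forall f, inCQ s t f -> inRpow m f -> ideal_gen s t rels f.
Implicit Types (D : elt V Ar -> elt V Ar) (N : 'M[CC]_a).
Local Notation I := (ideal_gen s t rels).
Local Notation LG := (lie_gen s t I (toupie_gens s t rels alpha)).
Local Notation mxder := (mxder o alpha).
Local Notation DerE_mxder := (DerE_mxder Hs Ht Hno Hnw HI2).

Lemma mxder_delta_earr p q b :
  mxder (delta_mx p q) (earr s b) = if b == alpha p then earr s (alpha q) else ezero.
Proof.
have [/codomP [k ->]|Hb] := boolP (b \in codom alpha); last first.
  by rewrite (mxder_earr_out s o) //; case: eqP => // Eb; case/negP: Hb; rewrite Eb codom_f.
rewrite (mxder_earr Hs Hinj) mul_delta_mx_cond (inj_eq Hinj).
by case: (k == p); rewrite ?(arrow_elt_delta Hs) // mulr0n (arrow_elt0 o alpha).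
Qed.

Lemma mxder_diag_earr j i1 b : j != i1 ->
  mxder (delta_mx j j - delta_mx i1 i1) (earr s b) =
    if b == alpha j then earr s (alpha j)
    else if b == alpha i1 then eopp (earr s (alpha i1)) else ezero.
Proof.
move=> ji1; have [/codomP [k ->]|Hb] := boolP (b \in codom alpha); last first.
  rewrite (mxder_earr_out s o) //.
  by case: eqP => [Eb|_]; [|case: eqP => // Eb]; case/negP: Hb; rewrite Eb codom_f.
rewrite (mxder_earr Hs Hinj) mulmxBr !mul_delta_mx_cond !(inj_eq Hinj).
case: (k =P j) => [->|_].
  by rewrite (negbTE ji1) mulr1n mulr0n subr0 (arrow_elt_delta Hs).
case: (k == i1); rewrite ?mulr1n mulr0n.
  by rewrite sub0r (arrow_eltN o alpha) (arrow_elt_delta Hs).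
by rewrite mulr0n subr0 (arrow_elt0 o alpha).
Qed.

Lemma lie_gen_delta p q : p != q -> LG (mxder (delta_mx p q)).
Proof.
move=> pq; apply: lg_gen; left; exists p, q; split=> //; split=> [|b]; first exact: DerE_mxder.
by rewrite mxder_delta_earr; exact: eqA_refl.
Qed.

Lemma lie_gen_diag j i1 : val i1 = 0%N -> (0 < val j)%N ->
  LG (mxder (delta_mx j j - delta_mx i1 i1)).
Proof.
move=> i10 j_gt0; have ji1 : j != i1 by apply: contraTneq j_gt0 => ->; rewrite i10.
apply: lg_gen; right; exists j, i1; split=> //; split=> [|b]; first exact: DerE_mxder.
by rewrite mxder_diag_earr //; exact: eqA_refl.
Qed.

Lemma lie_gen_mxder0 : LG (mxder 0).
Proof.
by apply: lg_eq (lg_zero _ _ _ _) (DerE_mxder 0) _; apply: hheq_pt => f _ p; rewrite mxder0.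
Qed.

Lemma lie_gen_mxderD N N' : LG (mxder N) -> LG (mxder N') -> LG (mxder (N + N')).
Proof.
move=> HN HN'; apply: lg_eq (lg_add HN HN') (DerE_mxder _) _.
by apply: hheq_pt => f _ p; rewrite mxderD.
Qed.

Lemma lie_gen_mxderZ c N : LG (mxder N) -> LG (mxder (c *: N)).
Proof.
move=> HN; apply: lg_eq (lg_scale c HN) (DerE_mxder _) _.
by apply: hheq_pt => f _ p; rewrite mxderZ.
Qed.

Lemma lie_gen_mxder N : \tr N = 0 -> LG (mxder N).
Proof.
move=> trN; have [a0|a_gt0] := posnP a.
  by rewrite (dim0_mx_eq N 0 a0); exact: lie_gen_mxder0.
pose i1 : 'I_a := Ordinal a_gt0.
rewrite (trace0_decomp i1 trN).
elim/big_ind: _ => [|M M'|i _]; [exact: lie_gen_mxder0|exact: lie_gen_mxderD|].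
elim/big_ind: _ => [|M M'|j _]; [exact: lie_gen_mxder0|exact: lie_gen_mxderD|].
case: (i =P j) => [_|/eqP ij]; apply: lie_gen_mxderZ; last exact: lie_gen_delta.
have [-> | ii1] := eqVneq i i1; first by rewrite subrr; exact: lie_gen_mxder0.
by apply: lie_gen_diag => //; rewrite lt0n; apply: contra ii1 => /eqP i0; apply/eqP/val_inj.
Qed.

Lemma hheq_mxder_on_arrows N D h : on_arrows s t I D h ->
  (forall b, mxder N (earr s b) = h b) -> hheq s t I (mxder N) D.
Proof.
move=> [HD Hh] Nh; apply: hheq_of_arrows Hm (DerE_mxder N) HD _ => b.
by rewrite Nh; exact: eqA_sym.
Qed.

Lemma lie_gen_inv D : LG D ->
  DerE s t I D /\ exists2 N, \tr N = 0 & hheq s t I (mxder N) D.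
Proof.
elim=> {D} [D [[p [q [pq HD]]] | [j [i1 [i10 j_gt0 HD]]]] |
           | D D' _ [HD [N trN H]] _ [HD' [N' trN' H']]
           | c D _ [HD [N trN H]] | D D' _ [HD [N trN H]] _ [HD' [N' trN' H']]
           | D D' _ [HD [N trN H]] HD' Hh].
- split; first by case: HD.
  exists (delta_mx p q); first by rewrite mxtrace_delta (negbTE pq).
  by apply: hheq_mxder_on_arrows HD _ => b; exact: mxder_delta_earr.
- have ji1 : j != i1 by apply: contraTneq j_gt0 => ->; rewrite i10.
  split; first by case: HD.
  exists (delta_mx j j - delta_mx i1 i1); first by rewrite raddfB /= !mxtrace_delta !eqxx subrr.
  by apply: hheq_mxder_on_arrows HD _ => b; exact: mxder_diag_earr.
- split; first by apply: DerE_ext (DerE_mxder 0) _ => f _; rewrite mxder0.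
  by exists 0; [exact: mxtrace0 | apply: hheq_pt => f _ p; rewrite mxder0].
- split; first exact: DerE_add.
  exists (N + N'); first by rewrite mxtraceD trN trN' addr0.
  by apply: hheq_trans (hheq_add H H'); apply: hheq_pt => f _ p; rewrite mxderD.
- split; first exact: DerE_scale.
  exists (c *: N); first by rewrite mxtraceZ trN mulr0.
  by apply: hheq_trans (hheq_scale c H); apply: hheq_pt => f _ p; rewrite mxderZ.
- split; first exact: DerE_br.
  exists (N' *m N - N *m N'); first by rewrite raddfB /= mxtrace_mulC subrr.
  apply: hheq_trans (hheq_br (DerE_mxder N) HD (DerE_mxder N') HD' H H').
  by apply: hheq_pt => f _ p; rewrite mxderB /dbr !(mxder_comp o Hinj).
- by split=> //; exists N => //; exact: hheq_trans H Hh.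
Qed.

End GeneratedLieSubalgebra.

Lemma toupie_source_sink (V Ar : finType) (s t : Ar -> V) (o w : V) :
  is_toupie s t o w -> (forall b, t b != o) /\ (forall b, s b != w).
Proof.
case=> _ Hin Hout _; split=> b.
  by move: (Hin o); rewrite eqxx => /forallP; apply.
by move: (Hout w); rewrite eqxx => /forallP; apply.
Qed.

Theorem proposition6p3 (V Ar : finType) (s t : Ar -> V) (o w : V)
    (rels : elt V Ar -> Prop) (a : nat) (alpha : 'I_a -> Ar) :
  is_toupie s t o w ->
  (forall r, rels r -> toupie_rel s t o w r) ->
  admissible s t (ideal_gen s t rels) ->
  injective alpha ->
  (forall b, ((s b == o) && (t b == w)) = (b \in codom alpha)) ->
  let I := ideal_gen s t rels in
  let G := fun D =>
    (exists p q : 'I_a, p != q /\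
       on_arrows s t I D (fun b => if b == alpha p then earr s (alpha q) else ezero))
    \/
    (exists j i1 : 'I_a, [/\ val i1 = 0%N, (0 < val j)%N &
       on_arrows s t I D (fun b =>
         if b == alpha j then earr s (alpha j)
         else if b == alpha i1 then eopp (earr s (alpha i1)) else ezero)]) in
  HH1_iso_sub (kron_s a) (kron_t a) (kron_I a) s t I (lie_gen s t I G).
Proof.
move=> /toupie_source_sink [Hno Hnw] _ [HI2 Hm] Hinj Hcod I G.
have Hst q : (s (alpha q) == o) && (t (alpha q) == w) by rewrite Hcod codom_f.
have Hs q : s (alpha q) = o by case/andP: (Hst q) => /eqP.
have Ht q : t (alpha q) = w by case/andP: (Hst q) => _ /eqP.
have HDer := DerE_mxder Hs Ht Hno Hnw HI2.
exists (fun D => mxder o alpha (traceless (kron_mx D))); split.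
- by move=> D _; split; [exact: HDer | exact/lie_gen_mxder/mxtrace_traceless].
- move=> D D' HD HD' /(kron_inner_scalar (DerE_sub HD HD')) [c].
  by rewrite kron_mxB => /traceless_eq_scalar EDD'; apply: hheq_pt => f _ p; rewrite EDD'.
split.
- by move=> D D' _ _; apply: hheq_pt => f _ p; rewrite kron_mxD tracelessD mxderD.
- by move=> c D _; apply: hheq_pt => f _ p; rewrite kron_mxZ tracelessZ mxderZ.
- move=> D D' HD HD'; apply: hheq_pt => f _ p.
  by rewrite kron_mx_br // traceless_commutator mxderB /dbr !(mxder_comp o Hinj).
- move=> D HD /(mxder_inner Hs Ht Hinj HI2) [c /traceless_scalar_inv].
  exact: kron_scalar_inner.
- move=> D2 _ /(lie_gen_inv Hs Ht Hno Hnw Hinj HI2 Hm) [_ [N trN HN]].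
  exists (mxder false id N); first exact: DerE_kder.
  by apply: hheq_trans HN; apply: hheq_pt => f _ p; rewrite kron_mx_kder traceless_id.
Qed.
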